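(* There exists an invertible $24\times24$ binary matrix $A$ such that the linear kernel $g({\bf u})={\bf u}A$ has partial distance sequence $(1,2,2,2,2,2,4,4,4,4,4,4,8,8,8,8,8,8,8,12,12,12,16,16)$. Consequently $E_{24}\ge\frac1{24}\sum_{i=0}^{23}\log_{24}D_{min}^{(i)}\approx0.51577$.
   Context: A kernel of dimension $\ell$ is a bijection $g:\{0,1\}^\ell\to\{0,1\}^\ell$; a linear kernel is $g({\bf u})={\bf u}G$ over $\mathbb{F}_2$ for an invertible $\ell\times\ell$ binary matrix $G$. ${\bf a}\bullet{\bf b}$ denotes concatenation, $d_H$ Hamming distance. Partial distances: $D_{min}^{(i)}=\min\{d_H(g({\bf w}\bullet 0\bullet{\bf u}),g({\bf w}\bullet 1\bullet {\bf v})) : {\bf w}\in\{0,1\}^i,\ {\bf u},{\bf v}\in\{0,1\}^{\ell-i-1}\}$, $i=0,\dots,\ell-1$; exponent $E(g)=\frac1\ell\sum_{i}\log_\ell D_{min}^{(i)}$; $E_\ell=\max_g E(g)$ over all kernels of dimension $\ell$. *)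

From HB Require Import structures.
From mathcomp Require Import all_boot all_order all_algebra.
From Stdlib Require Import Rdefinitions Raxioms RIneq Rfunctions Rpower.

Set Implicit Arguments.
Unset Strict Implicit.
Unset Printing Implicit Defensive.

Definition bitvec (l : nat) := 'rV['F_2]_l.

Definition dH (l : nat) (x y : bitvec l) : nat :=
  #|[set j : 'I_l | x ord0 j != y ord0 j]|.

(* x = w • a • u for some w of length i, i.e. x and y agree on the first i
   coordinates, x has 0 at position i and y has 1 at position i. *)
Definition pd_pair (l : nat) (i : nat) (x y : bitvec l) : bool :=
  [forall j : 'I_l, (j < i)%N ==> (x ord0 j == y ord0 j)] &&
  [forall j : 'I_l, (nat_of_ord j == i) ==> ((x ord0 j == @GRing.zero 'F_2) && (y ord0 j == @GRing.one 'F_2))].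

(* Partial distance D_min^(i) of a kernel g (the set of pairs is nonempty for
   i < l; the default l is an upper bound on all Hamming distances). *)
Definition partial_distance (l : nat) (g : bitvec l -> bitvec l) (i : nat) : nat :=
  \big[minn/l]_(p : bitvec l * bitvec l | pd_pair i p.1 p.2) dH (g p.1) (g p.2).

Definition logb (l x : R) : R := Rdiv (ln x) (ln l).

Definition exponent_of_seq (l : nat) (D : nat -> nat) : R :=
  Rmult (Rinv (INR l)) (\big[Rplus/R0]_(i < l) logb (INR l) (INR (D i))).

Definition kernel_exponent (l : nat) (g : bitvec l -> bitvec l) : R :=
  exponent_of_seq l (partial_distance g).

Definition is_max_exponent (l : nat) (M : R) : Prop :=
  (exists g : bitvec l -> bitvec l, bijective g /\ M = kernel_exponent g) /\
  (forall g : bitvec l -> bitvec l, bijective g -> Rle (kernel_exponent g) M).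

Definition pd24 : seq nat :=
  [:: 1; 2; 2; 2; 2; 2; 4; 4; 4; 4; 4; 4; 8; 8; 8; 8; 8; 8; 8; 12; 12; 12; 16; 16]%N.

(* For a linear kernel u |-> uA, a pair w•0•u, w•1•v differs by a vector c with
   c_j = 0 for j < i and c_i = 1, so D^(i) is the least weight of cA over such c;
   row i of A (c = e_i) gives the upper bound, which is the target sequence.  For
   the lower bound: at i = 0, cA <> 0 because A is invertible; for 0 < i < 6, cA is
   a nonzero sum of rows 1..23, which all have even weight, so wt(cA) >= 2; for
   i >= 6, cA = row_i + (a sum of rows after i), and the at most 2^17 such vectors
   are checked exhaustively.  Invertibility is certified by an explicit inverse,
   and E_24 >= E(uA) since uA is a bijection. *)
From HB Require Import structures.
From mathcomp Require Import all_boot all_order all_algebra.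
From Stdlib Require Import Rdefinitions Raxioms RIneq Rfunctions Rpower.

Set Implicit Arguments.
Unset Strict Implicit.
Unset Printing Implicit Defensive.
Import Order.TTheory GRing.Theory.

Local Open Scope ring_scope.

Lemma F2_natr_odd n : n%:R = (odd n)%:R :> 'F_2.
Proof. by rewrite -Fp_nat_mod // modn2. Qed.

Lemma F2_neq0 (x : 'F_2) : (x != 0) = (x == 1).
Proof. by case: x => [[|[|m]]] //. Qed.

Lemma F2_cases (x : 'F_2) : x = 0 \/ x = 1.
Proof. by case: (eqVneq x 0); [left | rewrite F2_neq0 => /eqP; right]. Qed.

Lemma F2_addr_neq0 (x y : 'F_2) : (x + y != 0) = (x != 0) (+) (y != 0).
Proof. by case: (F2_cases x) => ->; case: (F2_cases y) => ->. Qed.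

Lemma all_iota_mem (P : pred nat) m n :
  all P (iota m n) -> forall k, (m <= k)%nat -> (k < m + n)%nat -> P k.
Proof. by move=> /allP all_P k m_le_k k_lt; apply: all_P; rewrite mem_iota m_le_k. Qed.

Definition xorb_seq (a b : seq bool) : seq bool := [seq p.1 (+) p.2 | p <- zip a b].

(* [coset_weight_ge d acc rs]: every sum of [acc] with a subset of [rs] has at
   least [d] ones; it enumerates all 2 ^ size rs such sums. *)
Fixpoint coset_weight_ge (d : nat) (acc : seq bool) (rs : seq (seq bool)) : bool :=
  if rs is r :: rs' then coset_weight_ge d acc rs' && coset_weight_ge d (xorb_seq acc r) rs'
  else (d <= count id acc)%nat.

Section BinaryVectors.

Variable l : nat.
Implicit Types (u v c : 'rV['F_2]_l) (A : 'M['F_2]_l).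

Definition wH u : nat := #|[set j | u 0 j != 0]|.

Lemma dH_wH u v : dH u v = wH (v - u).
Proof. by apply: eq_card => j; rewrite !inE !mxE subr_eq0 eq_sym. Qed.

Lemma wH_eq0 u : (wH u == 0%nat) = (u == 0).
Proof.
rewrite cards_eq0; apply/eqP/eqP => [u0 | ->]; last by apply/setP => j; rewrite !inE mxE eqxx.
apply/rowP => j; rewrite mxE; case: (eqVneq (u 0 j) 0) => // nz.
by move/setP/(_ j): u0; rewrite !inE nz.
Qed.

Lemma wH_leq u : (wH u <= l)%nat.
Proof. by rewrite -[l]card_ord max_card. Qed.

Lemma wH_natr u : (wH u)%:R = \sum_j u 0 j.
Proof.
rewrite /wH -sum1_card big_mkcond natr_sum.
by apply: eq_bigr => j _; rewrite inE; case: (F2_cases (u 0 j)) => ->.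
Qed.

Lemma odd_wH u : odd (wH u) = (\sum_j u 0 j != 0).
Proof. by rewrite -wH_natr F2_natr_odd; case: (odd _); rewrite ?oner_eq0 ?eqxx. Qed.

Lemma even_wH_mul c A :
  (forall k, c 0 k != 0 -> ~~ odd (wH (row k A))) -> ~~ odd (wH (c *m A)).
Proof.
move=> even_rows; rewrite odd_wH negbK.
have -> : \sum_j (c *m A) 0 j = \sum_k c 0 k * \sum_j A k j.
  under eq_bigr do rewrite mxE.
  by rewrite exchange_big; apply: eq_bigr => k _; rewrite mulr_sumr.
apply/eqP/big1 => k _; case: (eqVneq (c 0 k) 0) => [-> | /even_rows]; first by rewrite mul0r.
rewrite odd_wH negbK => /eqP sum_row0.
suff -> : \sum_j A k j = 0 by rewrite mulr0.
by rewrite -[RHS]sum_row0; apply: eq_bigr => j _; rewrite mxE.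
Qed.

Lemma wH_mul_unit_gt0 c A : A \in unitmx -> c != 0 -> (0 < wH (c *m A))%nat.
Proof.
move=> A_unit; apply: contraNT; rewrite -eqn0Ngt wH_eq0 => /eqP cA0.
by rewrite -(mulmxK A_unit c) cA0 mul0mx.
Qed.

Lemma mulmx_leading_row c A (i : 'I_l) :
  (forall j : 'I_l, (j < i)%nat -> c 0 j = 0) ->
  c *m A = c 0 i *: row i A
            + \sum_(j <- [seq j : 'I_l <- enum 'I_l | (i < j)%nat]) c 0 j *: row j A.
Proof.
move=> c_lt_i; rewrite mulmx_sum_row (bigID (fun j : 'I_l => (i < j)%nat)) /=.
rewrite big_filter big_enum_cond /= addrC (bigD1 i) ?ltnn //= big1 ?addr0 // => j.
by rewrite -leqNgt andbC -(inj_eq val_inj) -ltn_neqAle => /c_lt_i ->; rewrite scale0r.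
Qed.

Lemma partial_distance_linear_leq A (i : 'I_l) :
  (partial_distance (fun u : bitvec l => u *m A) i <= wH (row i A))%nat.
Proof.
have pair_delta : pd_pair i 0 (delta_mx 0 i).
  apply/andP; split; apply/forallP => j; apply/implyP => ji; rewrite !mxE eqxx /=.
    by have /negbTE-> : j != i by rewrite neq_ltn ji.
  by move/eqP/val_inj: ji => ->; rewrite eqxx.
rewrite /partial_distance; apply: (@bigmin_inf _ nat _ l (0, delta_mx 0 i) _ _ _ pair_delta).
by rewrite /= dH_wH -mulmxBl subr0 -rowE.
Qed.

Lemma partial_distance_linear_geq A (i : 'I_l) d :
  (forall c, c 0 i = 1 -> (forall j : 'I_l, (j < i)%nat -> c 0 j = 0) ->
     (d <= wH (c *m A))%nat) ->
  (d <= partial_distance (fun u : bitvec l => u *m A) i)%nat.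
Proof.
move=> wH_leading; apply: (big_ind (fun m => d <= m)%nat).
- apply: leq_trans (wH_leq (row i A)); rewrite rowE; apply: wH_leading => [|j ji].
    by rewrite mxE !eqxx.
  by rewrite mxE; have /negbTE-> : j != i by rewrite neq_ltn ji.
- by move=> m n dm dn; rewrite leq_min dm dn.
move=> [x y] /andP[/forallP agree /forallP at_i]; rewrite /= dH_wH -mulmxBl.
apply: wH_leading => [|j ji].
  move/implyP: (at_i i); rewrite eqxx => /(_ isT) /andP[/eqP x0 /eqP y1].
  by rewrite !mxE x0 y1 subr0.
by move/implyP: (agree j) => /(_ ji) /eqP xy; rewrite !mxE xy subrr.
Qed.

Definition bits u : seq bool := [seq u 0 j != 0 | j <- enum 'I_l].

Lemma wH_bits u : wH u = count id (bits u).
Proof.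
rewrite /wH /bits count_map cardE {1}/enum_mem -enumT size_filter.
by apply: eq_count => j; rewrite /= inE.
Qed.

Lemma bitsD u v : bits (u + v) = xorb_seq (bits u) (bits v).
Proof. by rewrite /xorb_seq zip_map -map_comp; apply: eq_map => j; rewrite /= mxE F2_addr_neq0. Qed.

Lemma coset_weight_geP (I : Type) (js : seq I) (f : I -> 'rV_l) (c : I -> 'F_2) u d :
  coset_weight_ge d (bits u) [seq bits (f j) | j <- js] ->
  (d <= wH (u + \sum_(j <- js) c j *: f j))%nat.
Proof.
elim: js u => [|j js IHjs] u /=; first by rewrite big_nil addr0 wH_bits.
case/andP=> without_j with_j; rewrite big_cons addrA.
by case: (F2_cases (c j)) => ->; rewrite ?scale0r ?addr0 ?scale1r; apply: IHjs; rewrite ?bitsD.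
Qed.

Lemma mem_iota_ord (i : 'I_l) : nat_of_ord i \in iota 0 l.
Proof. by rewrite mem_iota ltn_ord. Qed.

Definition mx_of_supports (s : seq (seq nat)) : 'M['F_2]_l :=
  \matrix_(i, j) (nat_of_ord j \in nth [::] s i)%:R.

Definition bits_of_support (r : seq nat) : seq bool := [seq k \in r | k <- iota 0 l].

Lemma bits_row_mx_of_supports s (i : 'I_l) :
  bits (row i (mx_of_supports s)) = bits_of_support (nth [::] s i).
Proof.
rewrite /bits /bits_of_support -val_enum_ord -[RHS]map_comp; apply: eq_map => k.
by rewrite /= !mxE; case: (_ \in _); rewrite ?oner_eq0 ?eqxx.
Qed.

Lemma map_bits_rows_mx_of_supports s (i : 'I_l) :
  [seq bits (row j (mx_of_supports s)) | j <- [seq j : 'I_l <- enum 'I_l | (i < j)%nat]] =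
  [seq bits_of_support (nth [::] s k) | k <- [seq k <- iota 0 l | (i < k)%nat]].
Proof.
rewrite -val_enum_ord filter_map -[RHS]map_comp.
by apply: eq_map => j; exact: bits_row_mx_of_supports.
Qed.

Definition supports_mul_eq1 (s t : seq (seq nat)) : bool :=
  all (fun i => all (fun k =>
    odd (count (fun j => (j \in nth [::] s i) && (k \in nth [::] t j)) (iota 0 l)) == (i == k))
    (iota 0 l)) (iota 0 l).

Lemma mx_of_supports_mul_eq1 s t :
  supports_mul_eq1 s t -> mx_of_supports s *m mx_of_supports t = 1%:M.
Proof.
move=> /allP st; apply/matrixP => i k.
pose P j := (j \in nth [::] s i) && (nat_of_ord k \in nth [::] t j).
have odd_count : odd (count P (iota 0 l)) = (i == k).
  by move/allP: (st i (mem_iota_ord i)) => /(_ k (mem_iota_ord k)) /eqP.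
rewrite !mxE -odd_count -F2_natr_odd -sum1_count natr_sum [RHS]big_mkcond.
rewrite -val_enum_ord big_map big_enum /=.
apply: eq_bigr => j _; rewrite /mx_of_supports !mxE /P.
by case: (nat_of_ord j \in _); case: (nat_of_ord k \in _); rewrite ?mul1r ?mul0r.
Qed.

End BinaryVectors.

Lemma mulmx_bijective (R : comUnitRingType) m n (A : 'M[R]_n) :
  A \in unitmx -> bijective (fun u : 'M[R]_(m, n) => u *m A).
Proof. by move=> A_unit; exists (mulmx^~ (invmx A)) => u; rewrite ?mulmxK ?mulmxKV. Qed.

Definition A24_supports : seq (seq nat) :=
  [:: [:: 0];
     [:: 12; 23];
     [:: 20; 22];
     [:: 9; 11];
     [:: 6; 17];
     [:: 2; 7];
     [:: 6; 8; 10; 23];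
     [:: 0; 2; 14; 20];
     [:: 6; 17; 19; 21];
     [:: 3; 9; 13; 17];
     [:: 2; 8; 9; 15];
     [:: 4; 8; 13; 19];
     [:: 3; 5; 7; 8; 9; 13; 14; 23];
     [:: 3; 7; 10; 12; 13; 16; 22; 23];
     [:: 4; 5; 8; 10; 11; 15; 17; 22];
     [:: 3; 8; 10; 11; 13; 14; 15; 16];
     [:: 1; 2; 6; 7; 8; 10; 11; 15];
     [:: 1; 2; 4; 5; 10; 14; 15; 16];
     [:: 1; 2; 3; 11; 12; 14; 15; 20];
     [:: 1; 2; 4; 5; 6; 9; 10; 14; 17; 18; 20; 23];
     [:: 1; 2; 5; 6; 7; 11; 12; 15; 17; 19; 20; 21];
     [:: 2; 5; 6; 7; 8; 13; 14; 16; 18; 19; 21; 23];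
     [:: 1; 2; 3; 4; 6; 7; 8; 9; 12; 13; 15; 18; 19; 20; 22; 23];
     [:: 0; 2; 3; 4; 5; 8; 10; 11; 12; 14; 16; 17; 18; 19; 20; 21]].

Definition A24_inverse_supports : seq (seq nat) :=
  [:: [:: 0];
     [:: 0; 1; 2; 3; 4; 7; 9; 10; 11; 13; 14; 15; 17; 20; 21; 22];
     [:: 0; 1; 2; 3; 5; 7; 10; 13; 15];
     [:: 0; 1; 5; 6; 7; 16; 18];
     [:: 0; 3; 5; 6; 7; 8; 9; 10; 11; 13; 15; 17; 21; 22];
     [:: 0; 1; 2; 4; 5; 9; 10; 14; 21; 23];
     [:: 0; 1; 3; 5; 7; 8; 10; 11; 12; 14; 17; 21; 22];
     [:: 0; 1; 2; 3; 7; 10; 13; 15];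
     [:: 0; 2; 3; 4; 6; 10; 11; 12; 13; 14; 20; 22; 23];
     [:: 0; 2; 5; 6; 8; 14; 16; 17; 18; 19; 23];
     [:: 0; 1; 4; 5; 7; 8; 9; 12; 16; 20];
     [:: 0; 2; 3; 5; 6; 8; 14; 16; 17; 18; 19; 23];
     [:: 0; 1; 2; 9; 12; 13; 16; 17; 21; 23];
     [:: 0; 2; 3; 4; 5; 9; 10; 11; 12; 19; 21; 22; 23];
     [:: 0; 1; 3; 4; 6; 8; 9; 13; 14; 15; 16; 20; 21; 23];
     [:: 0; 1; 2; 4; 7; 8; 10; 11; 12; 15; 16; 17; 18; 19; 20; 22];
     [:: 0; 4; 7; 9; 10; 11; 14; 15; 16; 18; 19; 22];
     [:: 0; 1; 3; 4; 5; 7; 8; 10; 11; 12; 14; 17; 21; 22];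
     [:: 0; 1; 8; 9; 10; 13; 14; 16; 18; 23];
     [:: 0; 3; 7; 8; 10; 14; 15; 17; 19; 20; 22];
     [:: 0; 2; 4; 5; 6; 8; 9; 10; 14; 16; 20; 21; 23];
     [:: 0; 3; 4; 7; 10; 14; 15; 17; 19; 20; 22];
     [:: 0; 4; 5; 6; 8; 9; 10; 14; 16; 20; 21; 23];
     [:: 0; 2; 9; 12; 13; 16; 17; 21; 23]].

Definition A24 : 'M['F_2]_24 := mx_of_supports 24 A24_supports.

Lemma A24_unit : A24 \in unitmx.
Proof.
have /mx_of_supports_mul_eq1 AB1 : supports_mul_eq1 24 A24_supports A24_inverse_supports.
  by vm_compute.
exact: (mulmx1_unit AB1).1.
Qed.

Lemma wH_row_A24 (i : 'I_24) : wH (row i A24) = nth 0%nat pd24 i.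
Proof.
rewrite wH_bits bits_row_mx_of_supports; apply/eqP.
by move: (nat_of_ord i) (leq0n i) (ltn_ord i); apply: all_iota_mem; vm_compute.
Qed.

Lemma A24_coset_weights (i : 'I_24) : (6 <= i)%nat ->
  coset_weight_ge (nth 0%nat pd24 i) (bits (row i A24))
    [seq bits (row j A24) | j <- [seq j : 'I_24 <- enum 'I_24 | (i < j)%nat]].
Proof.
move=> i_ge6; rewrite bits_row_mx_of_supports map_bits_rows_mx_of_supports.
by move: (nat_of_ord i) i_ge6 (ltn_ord i); apply: (@all_iota_mem _ 6 18); vm_compute.
Qed.

Lemma wH_leading_A24 (i : 'I_24) (c : 'rV['F_2]_24) :
  c 0 i = 1 -> (forall j : 'I_24, (j < i)%nat -> c 0 j = 0) ->
  (nth 0%nat pd24 i <= wH (c *m A24))%nat.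
Proof.
move=> ci1 c_lt_i.
have cA_gt0 : (0 < wH (c *m A24))%nat.
  apply: wH_mul_unit_gt0 A24_unit _; apply: contra_neq (@oner_neq0 'F_2) => c0.
  by rewrite -ci1 c0 mxE.
have [i_lt6 | i_ge6] := ltnP i 6; last first.
  rewrite (mulmx_leading_row A24 c_lt_i) ci1 scale1r.
  exact/coset_weight_geP/A24_coset_weights.
have [i0 | i_gt0] := posnP i; first by rewrite i0.
have even_cA : ~~ odd (wH (c *m A24)).
  apply: even_wH_mul => k ck; rewrite wH_row_A24.
  have k_gt0 : (0 < k)%nat.
    by rewrite lt0n; apply: contra_neq ck => k0; apply: c_lt_i; rewrite k0.
  by move: (nat_of_ord k) k_gt0 (ltn_ord k); apply: (@all_iota_mem _ 1 23).
have -> : nth 0%nat pd24 i = 2%nat.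
  by move: (nat_of_ord i) i_gt0 i_lt6 => [|[|[|[|[|[|]]]]]].
by move: cA_gt0 even_cA; case: (wH _) => [|[|]].
Qed.

Lemma partial_distance_A24 (i : 'I_24) :
  partial_distance (fun u : bitvec 24 => u *m A24) i = nth 0%nat pd24 i.
Proof.
apply/eqP; rewrite eqn_leq -{1}wH_row_A24 partial_distance_linear_leq.
exact/partial_distance_linear_geq/wH_leading_A24.
Qed.

Theorem mainTheorem12 :
  (exists A : 'M['F_2]_24,
      A \in unitmx /\
      (forall i : 'I_24,
          partial_distance (fun u : bitvec 24 => mulmx u A) i = nth 0%N pd24 i)) /\
  (forall M : R, is_max_exponent 24 M ->
      Rle (exponent_of_seq 24 (fun i => nth 0%N pd24 i)) M).
Proof.
split; first by exists A24; split; [exact: A24_unit | exact: partial_distance_A24].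
move=> M [_ max_M]; have := max_M _ (mulmx_bijective 1 A24_unit).
by rewrite /kernel_exponent /exponent_of_seq; under eq_bigr do rewrite partial_distance_A24.
Qed.
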